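(* Let $q(x)=\limsup_{T\to\infty}\mathbb E^x\{\int_0^T(f(X_s)-\mu(f))ds\}$. Assume (C1) $q$ is continuous and bounded from below; (C2) for every bounded stopping time $\sigma$ and every $x\in E$, $q(x)=\mathbb E^x\{\int_0^\sigma(f(X_s)-\mu(f))ds+q(X_\sigma)\}$; (C3) $\mu(f)<0$. Then for any choice of $d(x)\in(\mu(f),0)$, $x\in E$, $$\gamma(x)=\sup_\tau\limsup_{T\to\infty}\mathbb E^x\Big\{\int_0^{\tau\wedge T}\big(f(X_s)-d(x)\big)ds\Big\}<\infty,$$ and moreover $\gamma(x)\le q(x)-A$, where $A=\inf_y q(y)$.
   Context: $E$ is a locally compact separable metric space in which every closed ball is compact. $(X_t)$ is a right-continuous time-homogeneous (standard) Markov process on $E$ with laws $\mathbb P^x$, expectations $\mathbb E^x$, satisfying the weak Feller property and ergodicity: there is a unique probability measure $\mu$ with $\|P_t(x,\cdot)-\mu\|_{TV}\to0$ for all $x$, where $P_t(x,\cdot)$ are the transition probabilities; $\mu(f)=\int f\,d\mu$. $f,g$ are continuous and bounded. Stopping times may be infinite. *)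

From HB Require Import structures.
From mathcomp Require Import all_boot all_order all_algebra.
From mathcomp Require Import all_classical all_reals all_analysis.
Set Implicit Arguments. Unset Strict Implicit. Unset Printing Implicit Defensive.
Import Order.TTheory GRing.Theory Num.Theory.
Import numFieldNormedType.Exports.
Local Open Scope classical_set_scope.
Local Open Scope ring_scope.
Local Open Scope ereal_scope.

(* Metric spaces with a distinguished point (needed because measurable types
   are pointed in MathComp-Analysis; the point plays no role). *)
#[short(type="pmetricType")]
HB.structure Definition PointedMetric (K : numDomainType) :=
  { M of Pointed M & Metric K M }.

Definition Borel (E : ptopologicalType) := g_sigma_algebraType (@open E).

Definition nice_space (R : realType) (E : pmetricType R) : Prop :=
  locally_compact [set: E] /\
  (exists D : set E, countable D /\ closure D = [set: E]) /\
  (forall (x : E) (r : R), (0 < r)%R -> compact [set y | (mdist x y <= r)%R]).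

Definition filtration (R : realType) d (Omega : measurableType d)
  (F : R -> set (set Omega)) : Prop :=
  (forall t, sigma_algebra [set: Omega] (F t)) /\
  (forall t, F t `<=` measurable) /\
  (forall s t, (0 <= s)%R -> (s <= t)%R -> F s `<=` F t).

Definition stopping_time (R : realType) d (Omega : measurableType d)
  (F : R -> set (set Omega)) (tau : Omega -> \bar R) : Prop :=
  (forall w, 0 <= tau w) /\
  (forall t : R, (0 <= t)%R -> F t [set w | tau w <= t%:E]).

Definition bounded_stopping_time (R : realType) d (Omega : measurableType d)
  (F : R -> set (set Omega)) (tau : Omega -> \bar R) : Prop :=
  stopping_time F tau /\ exists M : R, forall w, tau w <= M%:E.

Definition transition (R : realType) d (Omega : measurableType d)
  (E : pmetricType R) (P : E -> probability Omega R) (X : R -> Omega -> Borel E)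
  (t : R) (x : E) (B : set E) : \bar R :=
  P x (X t @^-1` B).

Definition feller_ergodic_markov (R : realType) d (Omega : measurableType d)
  (E : pmetricType R) (F : R -> set (set Omega))
  (P : E -> probability Omega R) (X : R -> Omega -> Borel E)
  (mu : probability (Borel E) R) : Prop :=
  filtration F /\
  (forall t (B : set (Borel E)), (0 <= t)%R -> measurable B -> F t (X t @^-1` B)) /\
  measurable_fun [set: (R * Omega)%type] (fun p : R * Omega => X p.1 p.2) /\
  (forall w t, (0 <= t)%R -> (fun s => X s w : E) @ t^'+ --> (X t w : E)) /\
  (forall x : E, P x (X 0%R @^-1` [set x]) = 1) /\
  (* (simple) Markov property, time-homogeneous *)
  (forall (x : E) (s t : R) (A : set Omega) (B : set (Borel E)),
      (0 <= s)%R -> (0 <= t)%R -> F t A -> measurable B ->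
      P x (A `&` X (t + s)%R @^-1` B) =
      \int[P x]_(w in A) transition P X s (X t w) B) /\
  (forall (t : R) (g : E -> R), (0 <= t)%R -> continuous g ->
      (exists M : R, forall y, (`|g y| <= M)%R) ->
      continuous (fun x : E => \int[P x]_w (g (X t w))%:E)) /\
  (* ergodicity: total variation convergence to mu *)
  (forall x : E,
      (fun t : R => ereal_sup [set `|transition P X t x B - mu B|
                                | B in (measurable : set (set (Borel E)))])
        @ +oo%R --> (0 : \bar R)).

Definition path_integral (R : realType) d (Omega : measurableType d)
  (E : pmetricType R) (X : R -> Omega -> Borel E) (f : E -> R) (c : R)
  (S : set R) (w : Omega) : \bar R :=
  \int[lebesgue_measure]_(s in S) (f (X s w) - c)%:E.

Definition q_fun (R : realType) d (Omega : measurableType d)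
  (E : pmetricType R) (P : E -> probability Omega R) (X : R -> Omega -> Borel E)
  (f : E -> R) (muf : R) (x : E) : \bar R :=
  limf_esup (fun T : R =>
    \int[P x]_w path_integral X f muf [set s | (0 <= s)%R /\ (s <= T)%R] w)
    +oo%R.

Definition gamma_fun (R : realType) d (Omega : measurableType d)
  (E : pmetricType R) (F : R -> set (set Omega))
  (P : E -> probability Omega R) (X : R -> Omega -> Borel E)
  (f : E -> R) (dd : E -> R) (x : E) : \bar R :=
  ereal_sup [set limf_esup (fun T : R =>
      \int[P x]_w path_integral X f (dd x)
         [set s | (0 <= s)%R /\ s%:E <= tau w /\ (s <= T)%R] w) +oo%R
    | tau in [set tau : Omega -> \bar R | stopping_time F tau]].

From HB Require Import structures.
From mathcomp Require Import all_boot all_order all_algebra.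
From mathcomp Require Import all_classical all_reals all_analysis.
From mathcomp Require Import measurable_realfun.
Import Order.TTheory GRing.Theory Num.Theory.
Import numFieldNormedType.Exports.
Local Open Scope classical_set_scope.
Local Open Scope ring_scope.

(* For a stopping time tau and a horizon T, sigma = tau /\ T is a bounded
   stopping time, so (C2) applies to it:
     q(x) = E^x[int_0^sigma (f(X_s) - mu(f)) ds + q(X_sigma)]
          >= E^x[int_0^sigma (f(X_s) - d(x)) ds] + A,
   because d(x) > mu(f) and q >= A.  Letting T -> oo and taking the supremum
   over tau gives gamma(x) <= q(x) - A, which is finite since q is finite and
   bounded below. *)

Section integral_monotonicity.
Local Open Scope ereal_scope.
Context {d} {T : measurableType d} {R : realType} (mu : {measure set T -> \bar R}).

(* Unlike [ge0_le_integral] and [le_integral], no measurability is required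
   (the integral of a nonnegative function is a supremum over the simple
   functions below it): the integrand of (C2) contains q(X_sigma), whose
   measurability is not known. *)
Lemma ge0_le_integral_nomeas (D : set T) (f g : T -> \bar R) :
  (forall x, D x -> 0 <= f x) -> (forall x, D x -> f x <= g x) ->
  \int[mu]_(x in D) f x <= \int[mu]_(x in D) g x.
Proof.
move=> f0 fg.
have g0 x : D x -> 0 <= g x by move=> Dx; exact: le_trans (f0 _ Dx) (fg _ Dx).
rewrite (ge0_integralE mu f0) (ge0_integralE mu g0).
apply: ereal_sup_le => _ [h hf <-]; exists h => //= x.
apply: le_trans (hf x) _; rewrite /patch; case: ifPn => // /[!inE] Dx; exact: fg.
Qed.

Lemma le_integral_nomeas (D : set T) (f g : T -> \bar R) :
  (forall x, D x -> f x <= g x) ->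
  \int[mu]_(x in D) f x <= \int[mu]_(x in D) g x.
Proof.
move=> fg; rewrite (integralE _ _ f) (integralE _ _ g).
have fg' : {in D, forall x, f x <= g x} by move=> x /[!inE]; exact: fg.
apply: leeB; apply: ge0_le_integral_nomeas => x Dx.
- exact: funepos_ge0.
- by apply: (funepos_le fg'); rewrite inE.
- exact: funeneg_ge0.
- by apply: (funeneg_le fg'); rewrite inE.
Qed.

End integral_monotonicity.

Section probability_integral.
Local Open Scope ereal_scope.
Context {d} {T : measurableType d} {R : realType} (P : probability T R).

Lemma integral_addr_cst_le (g h : T -> \bar R) (a K : R) :
  measurable_fun setT g -> (forall w, `|g w| <= K%:E) ->
  (forall w, g w + a%:E <= h w) ->
  \int[P]_w g w + a%:E <= \int[P]_w h w.
Proof.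
move=> mg gK gh.
have P1 : (P : {measure set T -> \bar R}) setT = 1 by exact: probability_setT.
have intg : P.-integrable setT g.
  apply/integrableP; split => //.
  apply: le_lt_trans (le_integral_nomeas P setT _ (cst K%:E) _) _.
    by move=> w _; exact: gK.
  by rewrite integral_cst // P1 mule1 ltry.
have inta : P.-integrable setT (EFin \o cst a).
  exact: finite_measure_integrable_cst.
have -> : \int[P]_w g w + a%:E = \int[P]_w (g w + (EFin \o cst a) w).
  rewrite integralD //; congr (_ + _).
  by have := integral_cst P measurableT a%:E; rewrite P1 mule1.
by apply: le_integral_nomeas => w _; exact: gh.
Qed.

End probability_integral.

Lemma abse_le_fin (R : realDomainType) (x : \bar R) (a : R) :
  ((- a)%:E <= x)%E -> (x <= a%:E)%E -> (`|x| <= a%:E)%E.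
Proof. by case: x => [r| |] //=; rewrite !lee_fin => ax xa; rewrite ler_norml ax. Qed.

Lemma abse_integral_le_itv (R : realType) (h : R -> R) (S : set R) (K T : R) :
  0 <= K -> 0 <= T -> S `<=` `[0, T]%classic -> (forall s, S s -> `|h s| <= K) ->
  (`| \int[lebesgue_measure]_(s in S) (h s)%:E | <= (K * T)%:E)%E.
Proof.
move=> K0 T0 ST hK.
have cstE (k : R) :
    (\int[lebesgue_measure]_s ((cst k%:E) \_ `[0%R, T]%classic) s = (k * T)%:E)%E.
  have lebT : lebesgue_measure (`[0%R, T]%classic : set R) = T%:E.
    rewrite lebesgue_measure_itv /= lte_fin oppr0 adde0.
    by case: ltgtP T0 => // <-.
  rewrite -integral_mkcond integral_cst; last exact: measurable_itv.
  by rewrite EFinM; congr (_ * _)%E.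
have hK' s : s \in S -> (- K <= h s <= K)%R by move/set_mem/hK; rewrite ler_norml.
have ST' s : s \in S -> s \in `[0%R, T]%classic by move/set_mem/ST/mem_set.
rewrite integral_mkcond; apply: abse_le_fin.
- rewrite -mulNr -cstE; apply: le_integral_nomeas => s _; rewrite /patch.
  case: ifPn => sT; case: ifPn => sS //.
  + by rewrite lee_fin; case/andP: (hK' _ sS).
  + by rewrite lee_fin oppr_le0.
  + by rewrite ST' in sT.
- rewrite -cstE; apply: le_integral_nomeas => s _; rewrite /patch.
  case: ifPn => sS; case: ifPn => sT //.
  + by rewrite lee_fin; case/andP: (hK' _ sS).
  + by rewrite ST' in sT.
Qed.

Lemma limf_esup_le (T : choiceType) (X : filteredType T) (R : realType)
    (h : X -> \bar R) (F : set (set X)) (c : \bar R) :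
  F [set x | (h x <= c)%E] -> (limf_esup h F <= c)%E.
Proof.
move=> Fhc; apply: le_trans (ereal_inf_lbound _) _; first by exists [set x | (h x <= c)%E].
by apply: ge_ereal_sup => _ [x hxc <-].
Qed.

Section stopping_times.
Context {R : realType} {d} {Omega : measurableType d} {F : R -> set (set Omega)}.
Implicit Type tau : Omega -> \bar R.

Lemma stopping_time_measurable tau :
  (forall t, F t `<=` measurable) -> stopping_time F tau -> measurable_fun setT tau.
Proof.
move=> Fm [tau0 tauF].
have le_m (r : R) : measurable [set w | (tau w <= r%:E)%E].
  have [r0|r0] := leP 0%R r; first exact: Fm (tauF r r0).
  rewrite (_ : [set _ | _] = set0) //; apply/seteqP; split => // w /= taur.
  by have := le_trans (tau0 w) taur; rewrite lee_fin leNgt r0.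
have lt_m (r : R) : measurable [set w | (tau w < r%:E)%E].
  rewrite (_ : [set _ | _] = \bigcup_n [set w | (tau w <= (r - n.+1%:R^-1)%:E)%E]).
    by apply: bigcupT_measurable => n; exact: le_m.
  apply/seteqP; split => w /=.
  - move=> taur; have /fineK tauE : tau w \is a fin_num.
      by rewrite ge0_fin_numE ?tau0 // (lt_le_trans taur) ?leey.
    rewrite -tauE lte_fin in taur.
    have [k hk] := ltr_add_invr taur; exists k => //=.
    by rewrite -tauE lee_fin lerBrDr ltW.
  - move=> [n _ /= taur]; apply: le_lt_trans taur _.
    by rewrite lte_fin ltrBlDr ltrDl invr_gt0 ltr0Sn.
move=> _; apply: (measurability _ (ErealGenInftyO.measurableE R)) => //.
move=> _ [_ [r ->] <-]; rewrite setTI.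
rewrite (_ : tau @^-1` _ = [set w | (tau w < r%:E)%E]); first exact: lt_m.
by apply/seteqP; split => w /=; rewrite in_itv.
Qed.

Lemma stopping_time_min_bounded tau (T : R) :
  (forall t, F t setT) -> 0 <= T -> stopping_time F tau ->
  bounded_stopping_time F (fun w => Order.min (tau w) T%:E).
Proof.
move=> FT T0 [tau0 tauF]; split; [split|exists T].
- by move=> w; rewrite le_min tau0 lee_fin.
- move=> t t0; have [Tt|tT] := leP T t.
  + rewrite (_ : [set w | _] = setT); first exact: FT.
    by apply/seteqP; split => // w _ /=; rewrite ge_min lee_fin Tt orbT.
  + rewrite (_ : [set w | _] = [set w | (tau w <= t%:E)%E]); first exact: tauF.
    by apply/seteqP; split => w /=; rewrite ge_min lee_fin (leNgt T t) tT orbF.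
- by move=> w; rewrite ge_min lexx orbT.
Qed.

End stopping_times.

Lemma continuous_Borel_measurable {R : realType} {E : pmetricType R} {f : E -> R} :
  continuous f -> measurable_fun setT (f : Borel E -> R).
Proof.
move=> cf _; apply: (measurability _ (RGenOInfty.measurableE R)) => //.
move=> _ [_ [x ->] <-]; rewrite setTI; apply: sub_sigma_algebra.
exact: (proj1 (continuousP f)) cf _ (rray_open x).
Qed.

Section path_integral.
Context {R : realType} {d} {Omega : measurableType d} {E : pmetricType R}
  (X : R -> Omega -> Borel E) (f : E -> R) (c : R).
Hypothesis X_measurable :
  measurable_fun [set: (R * Omega)%type] (fun p : R * Omega => X p.1 p.2).
Hypothesis f_continuous : continuous f.

(* Fubini–Tonelli, applied to the positive and negative parts of the integrand. *)
Lemma measurable_path_integral (S : set (R * Omega)) : measurable S ->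
  measurable_fun setT (fun w => path_integral X f c [set s | S (s, w)] w).
Proof.
move=> mS.
pose psi := fun p : R * Omega => (f (X p.1 p.2) - c)%:E.
have mpsi : measurable_fun setT psi.
  apply/measurable_EFinP; apply: measurable_funB => //.
  have := measurableT_comp (continuous_Borel_measurable f_continuous) X_measurable.
  exact.
pose phi := psi \_ S.
have mphi : measurable_fun setT phi.
  by apply/(measurable_restrictT _ _).1 => //; exact: measurable_funS mpsi.
rewrite (_ : (fun w => _) =
    fun w => fubini_G lebesgue_measure phi^\+ w - fubini_G lebesgue_measure phi^\- w)%E.
  apply: emeasurable_funB; apply: measurable_fun_fubini_tonelli_G.
  - exact: measurable_funepos.
  - by move=> p; exact: funepos_ge0.
  - exact: measurable_funeneg.
  - by move=> p; exact: funeneg_ge0.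
apply/funext => w; rewrite /path_integral integral_mkcond integralE.
by rewrite !unlock.
Qed.

Lemma abse_path_integral_le (M T : R) (S : set R) (w : Omega) :
  0 <= T -> (forall y, `|f y| <= M) -> S `<=` `[0%R, T]%classic ->
  (`| path_integral X f c S w | <= ((M + `|c|) * T)%:E)%E.
Proof.
move=> T0 fM ST; apply: abse_integral_le_itv => // [|s _].
  by apply: addr_ge0 => //; exact: le_trans (normr_ge0 _) (fM point).
by apply: le_trans (ler_normB _ _) _; rewrite lerD2r.
Qed.

End path_integral.

Lemma measurable_stopped_segment {R : realType} {d} {Omega : measurableType d}
    {tau : Omega -> \bar R} (T : R) : measurable_fun setT tau ->
  measurable [set p : R * Omega | 0 <= p.1 /\ (p.1%:E <= tau p.2)%E /\ p.1 <= T].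
Proof.
move=> mtau.
rewrite (_ : [set _ | _] = (`[0%R, T]%classic `*` setT) `&` [set p | (p.1%:E <= tau p.2)%E]).
  apply: measurableI; first by apply: measurableX => //; exact: measurable_itv.
  rewrite -[X in measurable X]setTI; apply: measurable_lee => //.
    by have := measurableT_comp (@EFin_measurable R setT) (@measurable_fst _ _ R Omega).
  by have := measurableT_comp mtau (@measurable_snd _ _ R Omega).
apply/seteqP; split => -[s w] /=; rewrite in_itv /=.
  by move=> [-> [-> ->]].
by move=> [[/andP[-> ->] _] ->].
Qed.

Section gamma_bound.
Context {R : realType} {d} {Omega : measurableType d} {E : pmetricType R}
  {F : R -> set (set Omega)} {P : E -> probability Omega R}
  {X : R -> Omega -> Borel E} {f : E -> R} {c : R} {q : E -> \bar R}.
Hypothesis F_setT : forall t, F t setT.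
Hypothesis F_measurable : forall t, F t `<=` measurable.
Hypothesis X_measurable :
  measurable_fun [set: (R * Omega)%type] (fun p : R * Omega => X p.1 p.2).
Hypothesis f_continuous : continuous f.
Context {M : R}.
Hypothesis f_bounded : forall y, `|f y| <= M.
Hypothesis q_fin : forall x, q x \is a fin_num.
Hypothesis q_bounded_below : exists A0 : R, forall x, (A0%:E <= q x)%E.
Hypothesis q_stopped : forall (sigma : Omega -> \bar R) (x : E),
  bounded_stopping_time F sigma ->
  q x = (\int[P x]_w
           (path_integral X f c [set s : R | (0 <= s)%R /\ (s%:E <= sigma w)%E] w
            + q (X (fine (sigma w)) w)))%E.

Lemma inf_range_fin : ereal_inf (range q) \is a fin_num.
Proof.
have [A0 A0q] := q_bounded_below.
rewrite fin_numElt; apply/andP; split.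
  apply: lt_le_trans (ltNyr A0) _.
  by apply: le_ereal_inf_tmp => _ [y _ <-]; exact: A0q.
apply: le_lt_trans (ereal_inf_lbound _) _; first by exists point.
by rewrite ltey_eq q_fin.
Qed.

Lemma stopped_expectation_le (tau : Omega -> \bar R) (e T : R) (x : E) :
  stopping_time F tau -> c <= e -> 0 <= T ->
  (\int[P x]_w path_integral X f e
      [set s | (0 <= s)%R /\ (s%:E <= tau w)%E /\ (s <= T)%R] w
   <= q x - ereal_inf (range q))%E.
Proof.
move=> tau_stop ce T0.
have infq_le y : (ereal_inf (range q) <= q y)%E by apply: ereal_inf_lbound; exists y.
pose sigma w := Order.min (tau w) T%:E.
have segment_sigma w : [set s : R | 0 <= s /\ (s%:E <= sigma w)%E] =
    [set s | 0 <= s /\ (s%:E <= tau w)%E /\ s <= T].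
  by apply/seteqP; split => s /=; rewrite /sigma le_min lee_fin => -[-> //] /andP.
rewrite (q_stopped _ x (stopping_time_min_bounded _ _ F_setT T0 tau_stop)).
rewrite -(fineK inf_range_fin) leeBrDr //.
apply: (integral_addr_cst_le (P x) _ _ _ ((M + `|e|) * T)).
- have tau_measurable := stopping_time_measurable _ F_measurable tau_stop.
  exact: (measurable_path_integral _ _ _ X_measurable f_continuous _
            (measurable_stopped_segment T tau_measurable)).
- move=> w; apply: abse_path_integral_le => // s [s0 [_ sT]].
  by rewrite /= in_itv /= s0 sT.
- move=> w; rewrite fineK ?inf_range_fin //; apply: leeD; last exact: infq_le.
  rewrite segment_sigma; apply: le_integral_nomeas => s _.
  by rewrite lee_fin lerD2l lerN2.
Qed.

Lemma gamma_fun_le (dd : E -> R) (x : E) : c <= dd x ->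
  (gamma_fun F P X f dd x <= q x - ereal_inf (range q))%E.
Proof.
move=> c_dd; apply: ge_ereal_sup => _ [tau tau_stop <-].
apply: limf_esup_le; exists 0%R; split => // T /= /ltW T0.
exact: stopped_expectation_le.
Qed.

End gamma_bound.

Theorem lemma2p17 (R : realType) (dO : measure_display) (Omega : measurableType dO)
  (E : pmetricType R) (F : R -> set (set Omega))
  (P : E -> probability Omega R) (X : R -> Omega -> Borel E)
  (mu : probability (Borel E) R) (f : E -> R) :
  nice_space E ->
  feller_ergodic_markov F P X mu ->
  continuous f -> (exists M : R, forall y, `|f y| <= M) ->
  let muf : R := Rintegral mu [set: Borel E] f in
  let q : E -> \bar R := q_fun P X f muf in
  (* (C1) *)
  (forall x, q x \is a fin_num) ->
  continuous (fun x => fine (q x)) ->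
  (exists A0 : R, forall x, (A0%:E <= q x)%E) ->
  (* (C2) *)
  (forall (sigma : Omega -> \bar R) (x : E),
     bounded_stopping_time F sigma ->
     q x = (\int[P x]_w
              (path_integral X f muf [set s : R | (0 <= s)%R /\ (s%:E <= sigma w)%E] w
               + q (X (fine (sigma w)) w)))%E) ->
  (* (C3) *)
  muf < 0 ->
  forall dd : E -> R, (forall x, muf < dd x < 0) ->
  forall x : E,
    (gamma_fun F P X f dd x < +oo)%E /\
    (gamma_fun F P X f dd x <= q x - ereal_inf (range q))%E.
Proof.
move=> _ [[F_sigma [F_measurable _]] [_ [X_measurable _]]] f_continuous [M f_bounded]
  muf q q_fin _ q_bounded_below q_stopped _ dd muf_dd x.
have F_setT t : F t setT.
  by have [F0 FD _] := F_sigma t; rewrite -(setD0 setT); exact: FD F0.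
have gamma_le := gamma_fun_le F_setT F_measurable X_measurable f_continuous
  f_bounded q_fin q_bounded_below q_stopped dd x (ltW (andP (muf_dd x)).1).
split=> //; apply: le_lt_trans gamma_le _.
by rewrite ltey_eq fin_numB q_fin (inf_range_fin q_fin q_bounded_below).
Qed.
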